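(* Let $G=(S,T,\pi)$ be a two-person win-lose game such that every set in $\mathcal{B}^1(G)$ is finite. Then the following are equivalent: (1) $\mathcal{B}^1_{\downarrow}(G)$ is ascending-union closed; (2) $\mathcal{B}^1_{\downarrow}(G)$ contains no countable strictly ascending chain $A_1\subsetneq A_2\subsetneq\cdots$; (3) $G$ is LNG-free.
   Context: A two-person win-lose game is a triple $G=(S,T,\pi)$ with non-empty sets $S,T$ and $\pi:S\times T\to\{0,1\}$. For $s\in S$, $B_s=\{t\in T:\pi(s,t)=1\}$, $\mathcal{B}^1(G)=\{B_s:s\in S\}$, $\mathcal{B}^1_{\downarrow}(G)=\{A\subseteq T:\exists s\in S,\ A\subseteq B_s\}$. A family $\mathcal{F}$ is ascending-union closed if $A_i\in\mathcal{F}$ ($i\ge1$) with $A_1\subset A_2\subset\cdots$ implies $\bigcup_iA_i\in\mathcal{F}$. The larger number game (LNG) is $(\mathbb{N},\mathbb{N},\pi)$ with $\pi(s,t)=1$ iff $s\ge t$. $G$ is LNG-free if there are no sequences of distinct $s_1,s_2,\ldots\in S$ and distinct $t_1,t_2,\ldots\in T$ with $\pi(s_i,t_j)=1\iff i\ge j$ (i.e., no subgame is isomorphic to LNG). *)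

From mathcomp Require Import all_boot.
From mathcomp Require Import boolp classical_sets cardinality.
Set Implicit Arguments. Unset Strict Implicit. Unset Printing Implicit Defensive.
Local Open Scope classical_set_scope.

(* A two-person win-lose game (S, T, pi) with pi : S -> T -> {0,1},
   encoded as a boolean payoff (true = 1). *)

Definition Bset (S T : Type) (pi : S -> T -> bool) (s : S) : set T :=
  [set t | pi s t].

Definition B1 (S T : Type) (pi : S -> T -> bool) : set (set T) :=
  [set A | exists s : S, A = Bset pi s].

Definition B1down (S T : Type) (pi : S -> T -> bool) : set (set T) :=
  [set A | exists s : S, A `<=` Bset pi s].

Definition ascending_union_closed (T : Type) (F : set (set T)) : Prop :=
  forall A : nat -> set T,
    (forall i, F (A i)) -> (forall i, A i `<=` A i.+1) ->
    F (\bigcup_i A i).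

Definition has_strict_ascending_chain (T : Type) (F : set (set T)) : Prop :=
  exists A : nat -> set T,
    (forall i, F (A i)) /\ (forall i, A i `<` A i.+1).

Definition LNG_free (S T : Type) (pi : S -> T -> bool) : Prop :=
  ~ exists (s : nat -> S) (t : nat -> T),
      injective s /\ injective t /\
      (forall i j, pi (s i) (t j) <-> (j <= i)%N).

From mathcomp Require Import all_boot.
From mathcomp Require Import boolp classical_sets cardinality.
Set Implicit Arguments. Unset Strict Implicit. Unset Printing Implicit Defensive.
Local Open Scope classical_set_scope.

(* Closedness excludes strict chains because the union of a strict chain is
   infinite while every member of B^1_down is finite; conversely, without
   strict chains every ascending chain stabilises and its union is its last
   member.  An LNG subgame yields the strict chain of prefixes
   {t_0, ..., t_i} <= B_{s_i}.  Conversely, from a strict chain with union U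
   the LNG subgame is built greedily: t_k is a point of U outside the finite
   set B_{s_0} u ... u B_{s_(k-1)}, which exists since no finite set contains
   the whole chain, and B_{s_k} contains a chain member holding t_0, ..., t_k. *)

Lemma dependent_choice (X : Type) (P : X -> Prop) (R : X -> X -> Prop) (x0 : X) :
  P x0 -> (forall x, P x -> exists2 y, P y & R x y) ->
  exists f : nat -> X, f 0 = x0 /\ forall n, R (f n) (f n.+1).
Proof.
move=> Px0 stepP.
have /choice[g gP] : forall x, exists y, P x -> P y /\ R x y.
  move=> x; have [/stepP[y Py Rxy]|nPx] := pselect (P x); first by exists y.
  by exists x => /nPx.
have Pf n : P (iter n g x0) by elim: n => // n IH; exact: (gP _ IH).1.
by exists (fun n => iter n g x0); split=> // n; exact: (gP _ (Pf n)).2.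
Qed.

Lemma ascending_chain_le (T : Type) (A : nat -> set T) :
  (forall i, A i `<=` A i.+1) -> {homo A : i j / (i <= j)%N >-> i `<=` j}.
Proof. exact: (homo_leq (@subset_refl T) (@subset_trans T)). Qed.

Lemma strict_chain_not_finitely_bounded (T : Type) (A : nat -> set T) (F : set T) :
  (forall i, A i `<` A i.+1) -> finite_set F -> ~ (forall i, A i `<=` F).
Proof.
move=> Astrict finF AF.
have /choice[a aP] : forall i, exists x, A i.+1 x /\ ~ A i x.
  by move=> i; have [_ /nonsubset[x]] := Astrict i; exists x.
have Ale := ascending_chain_le (fun i => properW (Astrict i)).
have a_inj : injective a.
  suff a_neq i j : (i < j)%N -> a i <> a j.
    by move=> i j aij; case: (ltngtP i j) => // /a_neq; [move/(_ aij) | move/(_ (esym aij))].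
  by move=> ij aij; apply: (aP j).2; rewrite -aij; apply: (Ale i.+1) => //; exact: (aP i).1.
apply: infinite_nat; have <- : a @^-1` F = setT.
  by apply/seteqP; split=> // i _; apply: (AF i.+1); exact: (aP i).1.
by apply: finite_preimage => // i j _ _; exact: a_inj.
Qed.

Lemma ascending_union_closed_no_strict_chain (T : Type) (F : set (set T)) :
  (forall A, F A -> finite_set A) -> ascending_union_closed F ->
  ~ has_strict_ascending_chain F.
Proof.
move=> finF closedF [A [FA Astrict]].
have /finF finU := closedF A FA (fun i => properW (Astrict i)).
by apply: (strict_chain_not_finitely_bounded Astrict finU) => i; exact: bigcup_sup.
Qed.

Lemma no_strict_chain_ascending_union_closed (T : Type) (F : set (set T)) :
  ~ has_strict_ascending_chain F -> ascending_union_closed F.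
Proof.
move=> nochain A FA Aincr; have Ale := ascending_chain_le Aincr.
have [N AN] : exists N, forall m, A m `<=` A N.
  apply: contra_notP nochain => /forallNP unbounded.
  have /choice[g gP] N : exists m, ~ A m `<=` A N by apply/existsNP/unbounded.
  have Ng N : (N <= g N)%N.
    by rewrite leqNgt; apply/negP => /ltnW/Ale/(gP N).
  exists (fun k => A (iter k g 0)); split=> // k /=.
  by split; [exact/Ale/Ng | exact: gP].
suff -> : \bigcup_i A i = A N by [].
by apply/seteqP; split; [exact: bigcup_sub | exact: bigcup_sup].
Qed.

Section WinLoseGame.
Variables (S T : Type) (pi : S -> T -> bool).

Lemma B1down_finite :
  (forall B, B1 pi B -> finite_set B) -> forall A, B1down pi A -> finite_set A.
Proof. by move=> finB A [s As]; apply: sub_finite_set As _; apply: finB; exists s. Qed.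

Lemma staircase_injective (s : nat -> S) (t : nat -> T) :
  (forall i j, pi (s i) (t j) <-> (j <= i)%N) -> injective s /\ injective t.
Proof.
move=> stair; split=> i j eij; apply/anti_leq/andP; split; apply/stair.
- by rewrite -eij; apply/stair.
- by rewrite eij; apply/stair.
- by rewrite eij; apply/stair.
- by rewrite -eij; apply/stair.
Qed.

Lemma staircase_strict_chain (s : nat -> S) (t : nat -> T) :
  injective t -> (forall i j, pi (s i) (t j) <-> (j <= i)%N) ->
  has_strict_ascending_chain (B1down pi).
Proof.
move=> t_inj stair; exists (fun i => t @` `I_i.+1); split=> i.
  by exists (s i) => _ [j /= ji <-]; apply/stair.
split=> [_ [j /= ji <-]|]; first by exists j => //=; exact: ltnW.
move/(_ (t i.+1)) => /= [|j /= ji /t_inj ij]; first by exists i.+1.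
by move: ji; rewrite ij ltnn.
Qed.

Section StaircaseFromChain.
Variable A : nat -> set T.
Hypotheses (finB : forall B, B1 pi B -> finite_set B)
  (downA : forall i, B1down pi (A i)) (Astrict : forall i, A i `<` A i.+1).

Let Ale := ascending_chain_le (fun i => properW (Astrict i)).

(* Stage k holds the pair (t_k, s_k), a chain index [level] with
   t_k in A level <= B_{s_k}, and [covered] = B_{s_0} u ... u B_{s_k};
   the staircase is read off from stage k+1, stage 0 being a dummy. *)
Record stage := Stage { level : nat; covered : set T; point : T; strategy : S }.

Definition next_stage (x y : stage) : Prop :=
  [/\ (level x <= level y)%N, A (level y) (point y), ~ covered x (point y),
      A (level y) `<=` Bset pi (strategy y)
    & covered y = covered x `|` Bset pi (strategy y)].

Lemma next_stage_exists (x : stage) :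
  finite_set (covered x) -> exists2 y, finite_set (covered y) & next_stage x y.
Proof.
move=> fin_cov.
have [m [t [lm Amt nct]]] :
    exists m t, [/\ (level x <= m)%N, A m t & ~ covered x t].
  apply: contra_notP (strict_chain_not_finitely_bounded Astrict fin_cov).
  move=> none i u Aiu; apply: contra_notP none => ncu.
  exists (maxn i (level x)), u; split=> //; first exact: leq_maxr.
  exact: Ale (leq_maxl _ _) _ Aiu.
have [s As] := downA m.
exists (Stage m (covered x `|` Bset pi s) t s); last by split.
by rewrite finite_setU; split=> //; apply: finB; exists s.
Qed.

Lemma strict_chain_staircase :
  inhabited S -> inhabited T ->
  exists (s : nat -> S) (t : nat -> T), forall i j, pi (s i) (t j) <-> (j <= i)%N.
Proof.
move=> [s0] [t0].
have [f [_ fnext]] := dependent_choice (P := fun x => finite_set (covered x))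
  (x0 := Stage 0 set0 t0 s0) (finite_set0 T) next_stage_exists.
have level_le : {homo level \o f : i j / (i <= j)%N}.
  by apply: homo_leq leq_trans _ => // n; case: (fnext n).
have covered_le : {homo covered \o f : i j / (i <= j)%N >-> i `<=` j}.
  by apply: ascending_chain_le => n /=; case: (fnext n) => _ _ _ _ ->; exact: subsetUl.
exists (fun i => strategy (f i.+1)), (fun j => point (f j.+1)) => i j; split.
  move=> pij; rewrite leqNgt; apply/negP => ij; case: (fnext j) => _ _ + _ _; apply.
  by apply: (covered_le i.+1) => //=; case: (fnext i) => _ _ _ _ ->; right.
move=> ji; case: (fnext i) => _ _ _ + _; apply.
by case: (fnext j) => _ Aj _ _ _; exact: Ale (level_le j.+1 i.+1 ji) _ Aj.
Qed.

End StaircaseFromChain.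

Lemma strict_chain_not_LNG_free :
  inhabited S -> inhabited T -> (forall B, B1 pi B -> finite_set B) ->
  has_strict_ascending_chain (B1down pi) -> ~ LNG_free pi.
Proof.
move=> hS hT finB [A [downA Astrict]].
have [s [t stair]] := strict_chain_staircase finB downA Astrict hS hT.
have [s_inj t_inj] := staircase_injective stair.
by apply; exists s, t.
Qed.

End WinLoseGame.

Theorem proposition2p9 (S T : Type) (pi : S -> T -> bool)
  (hS : inhabited S) (hT : inhabited T)
  (hfin : forall A, B1 pi A -> finite_set A) :
  (ascending_union_closed (B1down pi) <-> ~ has_strict_ascending_chain (B1down pi)) /\
  (~ has_strict_ascending_chain (B1down pi) <-> LNG_free pi).
Proof.
split; split.
- exact: ascending_union_closed_no_strict_chain (B1down_finite hfin).
- exact: no_strict_chain_ascending_union_closed.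
- move=> nochain [s [t [_ [t_inj stair]]]]; apply: nochain.
  exact: staircase_strict_chain t_inj stair.
- by move=> free chain; exact: strict_chain_not_LNG_free hS hT hfin chain free.
Qed.
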